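(* Let $(\mathcal A,\mathcal A_0)$ be an admissible $\mathcal T$-semiring pair and let $S\subseteq\mathcal T$ be a multiplicatively closed subset with $\mathbb 0\notin S$. Put $\hat S=(S\times\{\mathbb 0\})\cup(\{\mathbb 0\}\times S)\subseteq\mathcal A\times\mathcal A$. Then there exists a prime congruence on $\mathcal A$ disjoint from $\hat S$.
   Context: $\mathcal T$ is a multiplicative monoid. An admissible $\mathcal T$-semiring pair $(\mathcal A,\mathcal A_0)$ consists of a semiring $\mathcal A$ containing $\mathcal T$ as a multiplicative submonoid, additively generated by $\mathcal T\cup\{\mathbb 0\}$, and a subset $\mathcal A_0\subseteq\mathcal A$ containing $\mathbb 0$, closed under addition and under multiplication by $\mathcal T$, with $\mathcal A_0\cap\mathcal T=\emptyset$. A congruence on $\mathcal A$ is an equivalence relation on $\mathcal A$ closed (as a subset of $\mathcal A\times\mathcal A$) under componentwise addition and multiplication. The twist product is $(a_1,a_1')\cdot_{tw}(a_2,a_2')=(a_1a_2+a_1'a_2',\ a_1a_2'+a_1'a_2)$; for congruences $\Phi_1,\Phi_2$, $\Phi_1\cdot_{tw}\Phi_2$ is the set of twist products of an element of $\Phi_1$ with an element of $\Phi_2$. A congruence $\Phi$ is prime if for all congruences $\Phi_1,\Phi_2\supseteq\Phi$ with $\Phi_1\cdot_{tw}\Phi_2\subseteq\Phi$ one has $\Phi_1=\Phi$ or $\Phi_2=\Phi$. *)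

From HB Require Import structures.
From mathcomp Require Import all_boot all_order all_algebra.
Set Implicit Arguments. Unset Strict Implicit. Unset Printing Implicit Defensive.
Import GRing.Theory.
Local Open Scope ring_scope.

Definition admissible_pair (A : comPzSemiRingType) (T A0 : A -> Prop) : Prop :=
  T 1 /\
  (forall x y, T x -> T y -> T (x * y)) /\
  (forall a : A, exists s : seq A, (forall x, x \in s -> T x) /\ a = \sum_(x <- s) x) /\
  A0 0 /\
  (forall x y, A0 x -> A0 y -> A0 (x + y)) /\
  (forall t x, T t -> A0 x -> A0 (t * x)) /\
  (forall x, A0 x -> T x -> False).

Definition congruence (A : comPzSemiRingType) (Phi : A -> A -> Prop) : Prop :=
  [/\ (forall a, Phi a a),
      (forall a b, Phi a b -> Phi b a),
      (forall a b c, Phi a b -> Phi b c -> Phi a c),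
      (forall a b c d, Phi a b -> Phi c d -> Phi (a + c) (b + d))
    & (forall a b c d, Phi a b -> Phi c d -> Phi (a * c) (b * d))].

Definition twist (A : comPzSemiRingType) (p q : A * A) : A * A :=
  (p.1 * q.1 + p.2 * q.2, p.1 * q.2 + p.2 * q.1).

Definition rel_sub (A : Type) (R1 R2 : A -> A -> Prop) : Prop :=
  forall a b, R1 a b -> R2 a b.

Definition rel_eq (A : Type) (R1 R2 : A -> A -> Prop) : Prop :=
  forall a b, R1 a b <-> R2 a b.

Definition twist_prod_sub (A : comPzSemiRingType) (Phi1 Phi2 Phi : A -> A -> Prop) : Prop :=
  forall p q : A * A, Phi1 p.1 p.2 -> Phi2 q.1 q.2 ->
    Phi (twist p q).1 (twist p q).2.

Definition prime_congruence (A : comPzSemiRingType) (Phi : A -> A -> Prop) : Prop :=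
  congruence Phi /\
  forall Phi1 Phi2 : A -> A -> Prop,
    congruence Phi1 -> congruence Phi2 ->
    rel_sub Phi Phi1 -> rel_sub Phi Phi2 ->
    twist_prod_sub Phi1 Phi2 Phi ->
    rel_eq Phi1 Phi \/ rel_eq Phi2 Phi.

Definition S_hat (A : comPzSemiRingType) (S : A -> Prop) (p : A * A) : Prop :=
  (S p.1 /\ p.2 = 0) \/ (p.1 = 0 /\ S p.2).

From mathcomp Require Import all_boot all_order all_algebra.
From mathcomp Require Import boolp classical_sets.
Import GRing.Theory.
Set Implicit Arguments. Unset Strict Implicit. Unset Printing Implicit Defensive.
Local Open Scope classical_set_scope.
Local Open Scope ring_scope.

(* By Zorn's lemma there is a congruence Phi maximal among those disjoint from
   S^.  It is prime: if Phi1, Phi2 strictly contain Phi, maximality forces each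
   to meet S^, and then, being symmetric, to relate some s, t in S to 0.  The
   twist product of (s, 0) and (t, 0) is (s t, 0), which lies in S^ since S is
   multiplicatively closed, so Phi1 ._tw Phi2 is not contained in Phi. *)

Section DirectedUnion.
Variable A : comPzSemiRingType.

Lemma congruence_eq : congruence (@eq A).
Proof. by split=> *; subst. Qed.

Lemma congruence_directed_union (C : set (A -> A -> Prop)) :
  C !=set0 ->
  (forall P Q, C P -> C Q -> exists2 R, C R & rel_sub P R /\ rel_sub Q R) ->
  (forall P, C P -> congruence P) ->
  congruence (fun a b => exists2 P, C P & P a b).
Proof.
move=> [P0 CP0] directed congC.
have lift2 (op : A -> A -> A -> A -> Prop) :
    (forall P, C P -> forall a b c d, P a b -> P c d -> op a b c d) ->
    forall a b c d, (exists2 P, C P & P a b) -> (exists2 Q, C Q & Q c d) ->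
    op a b c d.
  move=> opC a b c d [P CP Pab] [Q CQ Qcd].
  have [R CR [PR QR]] := directed P Q CP CQ.
  exact: opC CR _ _ _ _ (PR _ _ Pab) (QR _ _ Qcd).
split.
- by move=> a; exists P0 => //; case: (congC P0 CP0).
- by move=> a b [P CP Pab]; exists P => //; case: (congC P CP) => _ + _ _ _; apply.
- move=> a b c Uab Ubc.
  apply: (lift2 (fun a b c d => b = c -> exists2 P, C P & P a d) _ a b b c) => //.
  move=> P CP a' b' c' d' Pab Pcd eq_bc; exists P => //; subst.
  by case: (congC P CP) => _ _ trP _ _; apply: trP Pab Pcd.
- apply: (lift2 (fun a b c d => exists2 P, C P & P (a + c) (b + d))).
  move=> P CP a b c d Pab Pcd; exists P => //.
  by case: (congC P CP) => _ _ _ + _; apply.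
- apply: (lift2 (fun a b c d => exists2 P, C P & P (a * c) (b * d))).
  move=> P CP a b c d Pab Pcd; exists P => //.
  by case: (congC P CP) => _ _ _ _; apply.
Qed.

End DirectedUnion.

Section AvoidingCongruences.
Variables (A : comPzSemiRingType) (S : A -> Prop).
Hypothesis S_mul : forall x y, S x -> S y -> S (x * y).
Hypothesis S_neq0 : ~ S 0.

Definition avoids_S_hat (Phi : A -> A -> Prop) :=
  forall p : A * A, S_hat S p -> ~ Phi p.1 p.2.

Lemma eq_avoids_S_hat : avoids_S_hat eq.
Proof. by move=> [x y] [[Sx /= ->]|[/= -> Sy]] /= eq_xy; apply: S_neq0; subst. Qed.

Lemma congruence_meets_S_hat (Phi : A -> A -> Prop) :
  congruence Phi -> ~ avoids_S_hat Phi -> exists2 s, S s & Phi s 0.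
Proof.
move=> [_ symPhi _ _ _] /existsNP [[x y]] /not_implyP [[[Sx /= ->]|[/= -> Sy]]].
- by move=> /contrapT; exists x.
- by move=> /contrapT /symPhi; exists y.
Qed.

Definition avoiding_congruence :=
  {Phi : A -> A -> Prop | congruence Phi /\ avoids_S_hat Phi}.

Definition avoiding_eq : avoiding_congruence :=
  exist _ (@eq A) (conj (congruence_eq A) eq_avoids_S_hat).

Definition avoiding_le (Phi Psi : avoiding_congruence) : bool :=
  `[< rel_sub (sval Phi) (sval Psi) >].

Lemma avoiding_chain_ub (Ch : set avoiding_congruence) :
  total_on Ch avoiding_le -> exists Psi, forall Phi, Ch Phi -> avoiding_le Phi Psi.
Proof.
move=> tot; have [[Phi0 ChPhi0]|] := pselect (exists Phi, Ch Phi); last first.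
  move=> noPhi; exists avoiding_eq.
  by move=> Phi ChPhi; case: noPhi; exists Phi.
pose U a b := exists2 P, (sval @` Ch) P & P a b.
have congU : congruence U.
  apply: congruence_directed_union; first by exists (sval Phi0), Phi0.
  - move=> _ _ [Phi ChPhi <-] [Psi ChPsi <-].
    have [/asboolP le|/asboolP le] := tot _ _ ChPhi ChPsi.
    + by exists (sval Psi); [exists Psi | split].
    + by exists (sval Phi); [exists Phi | split].
  - by move=> _ [Phi _ <-]; case: (svalP Phi).
have avoidsU : avoids_S_hat U.
  move=> p Sp [_ [Phi _ <-] Phi_p]; exact: (svalP Phi).2 p Sp Phi_p.
exists (exist _ U (conj congU avoidsU)) => Phi ChPhi.
by apply/asboolP => a b Phi_ab; exists (sval Phi) => //; exists Phi.
Qed.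

Lemma exists_maximal_avoiding_congruence :
  exists Phi : A -> A -> Prop, [/\ congruence Phi, avoids_S_hat Phi &
    forall Psi, congruence Psi -> avoids_S_hat Psi -> rel_sub Phi Psi ->
      rel_sub Psi Phi].
Proof.
have le_refl Phi : avoiding_le Phi Phi by apply/asboolP.
have le_trans Phi Psi Chi :
    avoiding_le Phi Psi -> avoiding_le Psi Chi -> avoiding_le Phi Chi.
  by move=> /asboolP le12 /asboolP le23; apply/asboolP => a b /le12/le23.
have [[Phi [congPhi avoidsPhi]] maxPhi] :=
  ZL_preorder avoiding_eq le_refl le_trans avoiding_chain_ub.
exists Phi; split=> // Psi congPsi avoidsPsi le.
exact/asboolP/(maxPhi (exist _ Psi (conj congPsi avoidsPsi)))/asboolP.
Qed.

Lemma maximal_avoiding_congruence_prime (Phi : A -> A -> Prop) :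
  congruence Phi -> avoids_S_hat Phi ->
  (forall Psi, congruence Psi -> avoids_S_hat Psi -> rel_sub Phi Psi ->
     rel_sub Psi Phi) ->
  prime_congruence Phi.
Proof.
move=> congPhi avoidsPhi maxPhi; split=> // P1 P2 cong1 cong2 le1 le2 tw.
have eq_of_avoids P : congruence P -> rel_sub Phi P -> avoids_S_hat P -> rel_eq P Phi.
  by move=> congP le avoidsP a b; split; [apply: maxPhi | apply: le].
have [avoids1|meets1] := pselect (avoids_S_hat P1); first by left; apply: eq_of_avoids.
have [avoids2|meets2] := pselect (avoids_S_hat P2); first by right; apply: eq_of_avoids.
have [s Ss P1s0] := congruence_meets_S_hat cong1 meets1.
have [t St P2t0] := congruence_meets_S_hat cong2 meets2.
have := tw (s, 0) (t, 0) P1s0 P2t0.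
rewrite /twist /= !mulr0 !mul0r !addr0.
by move/(avoidsPhi (s * t, 0)); case; left; split=> //; apply: S_mul.
Qed.

End AvoidingCongruences.

Theorem mainTheorem6 (A : comPzSemiRingType) (T A0 S : A -> Prop) :
  admissible_pair T A0 ->
  (forall x, S x -> T x) ->
  (forall x y, S x -> S y -> S (x * y)) ->
  ~ S 0 ->
  exists Phi : A -> A -> Prop,
    prime_congruence Phi /\ (forall p : A * A, S_hat S p -> ~ Phi p.1 p.2).
Proof.
move=> _ _ S_mul S_neq0.
have [Phi [congPhi avoidsPhi maxPhi]] := exists_maximal_avoiding_congruence S_neq0.
exists Phi; split=> //.
exact: (maximal_avoiding_congruence_prime S_mul congPhi avoidsPhi maxPhi).
Qed.
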